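(* Let $S\ni h$ be a polarized lattice. A subset $\Gamma\subset\operatorname{root}_1(S,h)$ admits a Weyl chamber for $\operatorname{rt}(S,h)$ compatible with $\Gamma$ if and only if there is no separating root $r\in\operatorname{root}_0(S,h)$. In this case, each Weyl chamber $\Delta'$ for the lattice $S':=(\mathbb{Z}h+\mathbb{Z}\Gamma)^\perp\subset S$ is a face of a unique Weyl chamber $\Delta$ for $\operatorname{rt}(S,h)$ compatible with $\Gamma$.
   Context: All lattices are even and nondegenerate; $(S,h)$ polarized means $S$ hyperbolic and $h^2>0$. $\operatorname{root}_n(S,h)=\{r\in S: r^2=-2,\ r\cdot h=n\}$; $\operatorname{rt}(S,h)$ is the root lattice spanned by $\operatorname{root}_0(S,h)$; a Weyl chamber for the root lattice of a negative definite lattice $S'$ is one for the lattice generated by roots of $S'$. A Weyl chamber $\Delta$ is determined by its set of positive roots $P_\Delta$ (closed half of the roots); $\mathfrak{b}(\Delta)$ are its simple roots. $\operatorname{Fn}_\Delta(S,h)=\{l\in\operatorname{root}_1(S,h): l\cdot e\ge0\ \forall e\in\mathfrak{b}(\Delta)\}$. A Weyl chamber $\Delta$ is compatible with $\Gamma$ if $\Gamma\subset\operatorname{Fn}_\Delta(S,h)$. A root $r\in\operatorname{root}_0(S,h)$ is separating (with respect to $\Gamma$) if there are $u,v\in\Gamma$ with $r\cdot u>0$ and $r\cdot v<0$. That $\Delta'$ is a face of $\Delta$ means $P_\Delta\cap S'=P_{\Delta'}$. *)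

From mathcomp Require Import all_boot all_order all_algebra.
Set Implicit Arguments. Unset Strict Implicit. Unset Printing Implicit Defensive.
Import Order.TTheory GRing.Theory Num.Theory.
Local Open Scope ring_scope.

(* A lattice of rank n is Z^n (row vectors 'rV[int]_n) with the bilinear
   form given by a symmetric Gram matrix G. *)
Definition vec n := 'rV[int]_n.

Definition form n (G : 'M[int]_n) (x y : vec n) : int := (x *m G *m y^T) 0 0.

(* pairing of a lattice vector with a vector of S (x) Q *)
Definition formQ n (G : 'M[int]_n) (x : vec n) (v : 'rV[rat]_n) : rat :=
  (map_mx (fun z : int => z%:~R) x *m map_mx (fun z : int => z%:~R) G *m v^T) 0 0.

Definition symmetric_gram n (G : 'M[int]_n) : Prop := G^T = G.
Definition even_lattice n (G : 'M[int]_n) : Prop :=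
  forall x : vec n, (2 %| form G x x)%Z.
Definition nondegenerate n (G : 'M[int]_n) : Prop := \det G != 0.
(* hyperbolic: signature (1, n-1), i.e. the maximal dimension of a positive
   definite subspace is exactly 1 (together with nondegeneracy).  A rank-2
   sublattice spanned by u, v is positive definite iff u^2 > 0 and its Gram
   determinant u^2 v^2 - (u.v)^2 is > 0. *)
Definition hyperbolic n (G : 'M[int]_n) : Prop :=
  nondegenerate G /\
  (exists x : vec n, 0 < form G x x) /\
  (forall u v : vec n,
      ~ (0 < form G u u /\ 0 < form G u u * form G v v - form G u v ^+ 2)).

Definition even_lattice_form n (G : 'M[int]_n) : Prop :=
  symmetric_gram G /\ even_lattice G /\ nondegenerate G.

Definition polarized n (G : 'M[int]_n) (h : vec n) : Prop :=
  even_lattice_form G /\ hyperbolic G /\ 0 < form G h h.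

Definition vset n := vec n -> Prop.

Definition is_root n (G : 'M[int]_n) (r : vec n) : Prop := form G r r = -2.

Definition root_k n (G : 'M[int]_n) (h : vec n) (k : int) : vset n :=
  fun r => is_root G r /\ form G r h = k.

Definition perp_lattice n (G : 'M[int]_n) (h : vec n) (Gam : vset n) : vset n :=
  fun x => form G x h = 0 /\ forall g, Gam g -> form G x g = 0.

Definition roots_of n (G : 'M[int]_n) (L : vset n) : vset n :=
  fun r => L r /\ is_root G r.

(* A Weyl chamber for the root system R (the set of roots of a negative
   definite lattice), represented by its set P of positive roots:
   P = {r in R | r.v > 0} for some v not orthogonal to any root of R. *)
Definition weyl_chamber n (G : 'M[int]_n) (R P : vset n) : Prop :=
  exists v : 'rV[rat]_n,
    (forall r, R r -> formQ G r v != 0) /\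
    (forall r, P r <-> (R r /\ 0 < formQ G r v)).

Definition simple_roots n (P : vset n) : vset n :=
  fun e => P e /\ ~ (exists a b, P a /\ P b /\ e = a + b).

Definition Fn n (G : 'M[int]_n) (h : vec n) (P : vset n) : vset n :=
  fun l => root_k G h 1 l /\ forall e, simple_roots P e -> 0 <= form G l e.

Definition compatible n (G : 'M[int]_n) (h : vec n) (P Gam : vset n) : Prop :=
  forall l, Gam l -> Fn G h P l.

Definition separating n (G : 'M[int]_n) (h : vec n) (Gam : vset n) (r : vec n) :
  Prop :=
  root_k G h 0 r /\ exists u v, Gam u /\ Gam v /\ 0 < form G r u /\ form G r v < 0.

Definition face n (L : vset n) (P P' : vset n) : Prop :=
  forall r, (P r /\ L r) <-> P' r.

(* A Weyl chamber of the roots of h^perp is cut out by an integral vector y, and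
   its positive roots are sums of simple roots (induct on r.y), so Gam is
   compatible with it iff every l in Gam pairs nonnegatively with every positive
   root. Since r or -r is positive, a separating root r excludes compatibility,
   and a root r outside S' is positive in a compatible chamber iff r.l > 0 for
   some l in Gam, which gives uniqueness. For existence, start from a chamber of
   S' cut out by y' and take y = y' + M w, where w is the sum of finitely many
   elements of Gam spanning Gam over Q and M exceeds |r.y'| on all roots of
   h^perp (a bounded set since h^perp is negative definite). Roots in S' keep
   their sign; a root outside S' pairs with Gam with a constant sign (no root
   separates) and not identically zero, so r.w is nonzero and dictates the sign
   of r.y. *)

From mathcomp Require Import all_boot all_order all_algebra.
From mathcomp Require Import zify.
From Stdlib Require Import Classical.
Set Implicit Arguments. Unset Strict Implicit. Unset Printing Implicit Defensive.
Import Order.TTheory GRing.Theory Num.Theory.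
Local Open Scope ring_scope.

Section Form.
Variables (n : nat) (G : 'M[int]_n).

Lemma formDl x y z : form G (x + y) z = form G x z + form G y z.
Proof. by rewrite /form !mulmxDl mxE. Qed.

Lemma formDr x y z : form G z (x + y) = form G z x + form G z y.
Proof. by rewrite /form linearD /= mulmxDr mxE. Qed.

Lemma formZr (c : int) x z : form G z (c *: x) = c * form G z x.
Proof. by rewrite /form linearZ /= -scalemxAr mxE. Qed.

Lemma formZl (c : int) x z : form G (c *: x) z = c * form G x z.
Proof. by rewrite /form -!scalemxAl mxE. Qed.

Lemma formNl x z : form G (- x) z = - form G x z.
Proof. by rewrite /form !mulNmx mxE. Qed.

Lemma formNr x z : form G z (- x) = - form G z x.
Proof. by rewrite -scaleN1r formZr mulN1r. Qed.

Lemma form_sumr x (s : seq (vec n)) :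
  form G x (\sum_(l <- s) l) = \sum_(l <- s) form G x l.
Proof. by rewrite /form raddf_sum mulmx_sumr summxE. Qed.

Lemma form_delta x (i : 'I_n) : form G x (delta_mx 0 i) = (x *m G) 0 i.
Proof. by rewrite /form trmx_delta -colE mxE. Qed.

Lemma formC : symmetric_gram G -> forall x y, form G x y = form G y x.
Proof.
move=> sG x y; have trE (A : 'M[int]_1) : A 0 0 = A^T 0 0 by rewrite mxE.
by rewrite /form [RHS]trE !trmx_mul trmxK sG mulmxA.
Qed.

Definition vecQ (x : vec n) : 'rV[rat]_n := map_mx intr x.

Lemma formQ_vecQ x y : formQ G x (vecQ y) = (form G x y)%:~R.
Proof. by rewrite /formQ /form /vecQ map_trmx -!map_mxM mxE. Qed.

Lemma formQZr x (c : rat) v : formQ G x (c *: v) = c * formQ G x v.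
Proof. by rewrite /formQ linearZ /= -scalemxAr mxE. Qed.

End Form.

Lemma dominated_gt0 (a b B : int) : `|a| <= B -> 0 < b -> 0 < a + (B + 1) * b.
Proof. by rewrite ler_norml => /andP[? ?] ?; nia. Qed.

Lemma dominated_neq0 (a b B : int) : `|a| <= B -> b != 0 -> a + (B + 1) * b != 0.
Proof.
move=> aB; rewrite neq_lt => /orP[b_lt0|b_gt0]; last by rewrite gt_eqF ?dominated_gt0.
by rewrite -oppr_eq0 opprD -mulrN lt0r_neq0 ?dominated_gt0 ?normrN ?oppr_gt0.
Qed.

Section Bounded.
Variables (n : nat) (G : 'M[int]_n).

Definition form_bounded (R : vset n) :=
  forall x, exists B : int, forall r, R r -> `|form G r x| <= B.

Lemma root0_form_bounded h : symmetric_gram G -> hyperbolic G -> 0 < form G h h ->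
  form_bounded (root_k G h 0).
Proof.
move=> sG [_ [_ no_pos_plane]] hh_gt0 x.
exists (2 * (form G h x ^+ 2 - form G h h * form G x x)) => r [rr rh].
(* the plane spanned by h and c r + 2 x, with c = r.x, is not positive definite *)
set c := form G r x.
have := no_pos_plane h (c *: r + 2%:Z *: x).
rewrite !(formDl, formDr, formZl, formZr) rr (formC sG x r) (formC sG h r) rh -/c.
move=> not_pos_plane; have /negP := fun P => not_pos_plane (conj hh_gt0 P).
rewrite -leNgt => plane_le0.
have : form G h h * (c * c) <= 2 * (form G h x ^+ 2 - form G h h * form G x x) by nia.
nia.
Qed.

Lemma exists_vector_detecting (R : vset n) (xs : seq (vec n)) : form_bounded R ->
  exists y, forall r, R r -> form G r y = 0 -> forall x, x \in xs -> form G r x = 0.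
Proof.
move=> bR; elim: xs => [|x xs [y Hy]]; first by exists 0.
have [B HB] := bR x; exists (x + (B + 1) *: y) => r Rr.
rewrite formDr formZr => r_y0.
have ry0 : form G r y = 0.
  case: (eqVneq (form G r y) 0) => // /(dominated_neq0 (HB r Rr)) /eqP.
  by move/(_ r_y0).
move=> z; rewrite inE => /predU1P[->|zs]; last exact: Hy.
by move: r_y0; rewrite ry0 mulr0 addr0.
Qed.

Lemma exists_regular_vector (R : vset n) : form_bounded R ->
  (forall r, R r -> r *m G != 0) -> exists y, forall r, R r -> form G r y != 0.
Proof.
move=> bR rG_neq0; have [y Hy] := exists_vector_detecting [seq delta_mx 0 i | i <- enum 'I_n] bR.
exists y => r Rr; apply/eqP => ry0; move/negP: (rG_neq0 r Rr); apply; apply/eqP.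
apply/rowP => i; rewrite -form_delta mxE; apply: (Hy r Rr ry0).
by rewrite map_f ?mem_enum.
Qed.

Lemma root_mulmx_neq0 r : is_root G r -> r *m G != 0.
Proof. by rewrite /is_root /form => rr; apply/eqP => rG0; move: rr; rewrite rG0 mul0mx mxE. Qed.

End Bounded.

Lemma exists_spanning_seq (F : fieldType) (T : eqType) m (f : T -> 'rV[F]_m)
    (A : T -> Prop) :
  exists s : seq T, (forall t, t \in s -> A t) /\
    forall t, A t -> (f t <= \sum_(u <- s) <<f u>>)%MS.
Proof.
apply: NNPP => no_span.
suff grow k : exists s : seq T, (forall t, t \in s -> A t) /\
    (k <= \rank (\sum_(u <- s) <<f u>>)%MS)%N.
  have [s [_ rk]] := grow m.+1.
  by move: rk; rewrite leqNgt ltnS rank_leq_col.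
elim: k => [|k [s [sA rk_s]]]; first by exists [::].
have [t t_new] : exists t, ~ (A t -> (f t <= \sum_(u <- s) <<f u>>)%MS).
  by apply: not_all_ex_not => s_span; apply: no_span; exists s.
have [At t_out] := imply_to_and _ _ t_new.
exists (t :: s); split; first by move=> u; rewrite inE => /predU1P[->|/sA].
have : (\sum_(u <- s) <<f u>> < \sum_(u <- t :: s) <<f u>>)%MS.
  by rewrite big_cons ltmxE addsmxSr addsmx_sub genmxE negb_and; apply/orP; left; apply/negP.
by rewrite ltmxErank => /andP[_]; apply: leq_ltn_trans.
Qed.

Section Orthogonality.
Variables (n : nat) (G : 'M[int]_n).

Lemma form_eq0_span (s : seq (vec n)) x g :
  (forall l, l \in s -> form G l x = 0) ->
  (vecQ g <= \sum_(l <- s) <<vecQ l>>)%MS -> form G g x = 0.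
Proof.
move=> s_orth g_span.
set c := map_mx intr G *m (vecQ x)^T.
have formE y : (vecQ y *m c) 0 0 = (form G y x)%:~R by rewrite mulmxA -formQ_vecQ.
have span_ker : (\sum_(l <- s) <<vecQ l>> <= kermx c)%MS.
  rewrite big_seq; elim/big_rec: _ => [|l S ls S_ker]; first exact: sub0mx.
  rewrite addsmx_sub S_ker andbT genmxE sub_kermx; apply/eqP/matrixP => i j.
  by rewrite !ord1 formE s_orth // mxE.
have /matrixP/(_ 0 0) := sub_kermxP (submx_trans g_span span_ker).
by rewrite formE mxE => /eqP; rewrite intr_eq0 => /eqP.
Qed.

Lemma exists_orth_spanning (Gam : vset n) :
  exists s : seq (vec n), (forall l, l \in s -> Gam l) /\
    forall x, (forall l, l \in s -> form G l x = 0) -> forall g, Gam g -> form G g x = 0.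
Proof.
have [s [sGam s_span]] := exists_spanning_seq (@vecQ n) Gam.
by exists s; split => // x s_orth g /s_span; apply: form_eq0_span.
Qed.

End Orthogonality.

Lemma rV_int_multiple n (v : 'rV[rat]_n) :
  exists2 D : int, 0 < D & exists y : vec n, vecQ y = D%:~R *: v.
Proof.
exists (\prod_(j < n) denq (v 0 j)); first by apply: prodr_gt0 => j _; exact: denq_gt0.
exists (\row_j (numq (v 0 j) * \prod_(k < n | k != j) denq (v 0 k))).
apply/rowP => j; rewrite !mxE [in RHS](bigD1 j) //= !intrM numqE.
by rewrite [RHS]mulrC [RHS]mulrA.
Qed.

Section Chambers.
Variables (n : nat) (G : 'M[int]_n).

Definition regular (R : vset n) (y : vec n) := forall r, R r -> form G r y != 0.

Definition chamber_of (R : vset n) (y : vec n) : vset n :=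
  fun r => R r /\ 0 < form G r y.

Definition nonneg_on (Gam P : vset n) := forall g r, Gam g -> P r -> 0 <= form G g r.

Lemma weyl_chamberP R P :
  weyl_chamber G R P <-> exists y, regular R y /\ forall r, P r <-> chamber_of R y r.
Proof.
split=> [[v [v_reg Pv]]|[y [y_reg Py]]]; last first.
  by exists (vecQ y); split=> r; rewrite formQ_vecQ ?intr_eq0 ?ltr0z; [apply: y_reg|apply: Py].
have [D D_gt0 [y yE]] := rV_int_multiple v.
have formE r : (form G r y)%:~R = D%:~R * formQ G r v by rewrite -formQ_vecQ yE formQZr.
exists y; split=> [r Rr|r].
  by rewrite -(intr_eq0 rat) formE mulf_neq0 ?v_reg ?intr_eq0 ?gt_eqF.
by rewrite Pv /chamber_of -(ltr0z rat) formE pmulr_rgt0 ?ltr0z.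
Qed.

Lemma weyl_chamber_orN R P r : (forall r, R r -> R (- r)) ->
  weyl_chamber G R P -> R r -> P r \/ P (- r).
Proof.
move=> RN /weyl_chamberP[y [y_reg Py]] Rr; rewrite !Py /chamber_of formNl oppr_gt0.
have := y_reg r Rr; rewrite neq_lt => /orP[ry_lt0|ry_gt0]; [right|left]; split=> //.
exact: RN.
Qed.

Lemma weyl_chamber_sub R P r : weyl_chamber G R P -> P r -> R r.
Proof. by case=> v [_ Pv] /Pv[]. Qed.

Lemma simple_roots_ind (P : vset n) y (Q : vec n -> Prop) :
  (forall r, P r -> 0 < form G r y) ->
  (forall e, simple_roots P e -> Q e) ->
  (forall a b, P a -> P b -> Q a -> Q b -> Q (a + b)) ->
  forall r, P r -> Q r.
Proof.
move=> P_pos Q_simple Q_add.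
suff Q_height k r : P r -> form G r y <= k%:Z -> Q r.
  by move=> r Pr; apply: (Q_height `|form G r y|%N) => //; lia.
elim: k r => [|k IHk] r Pr r_le; first by have := P_pos r Pr; lia.
case: (classic (exists a b, P a /\ P b /\ r = a + b)) => [[a [b [Pa [Pb r_ab]]]]|r_simple].
  rewrite r_ab formDl in r_le *; have := P_pos a Pa; have := P_pos b Pb => b_gt0 a_gt0.
  by apply: Q_add => //; [apply: (IHk a Pa) | apply: (IHk b Pb)]; lia.
exact: Q_simple (conj Pr r_simple).
Qed.

End Chambers.

Section Compatible.
Variables (n : nat) (G : 'M[int]_n) (h : vec n) (Gam : vset n).
Hypothesis sG : symmetric_gram G.

Local Notation R0 := (root_k G h 0).
Local Notation S' := (perp_lattice G h Gam).

Lemma root0N r : R0 r -> R0 (- r).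
Proof. by case=> rr rh; split; rewrite /is_root ?formNl ?formNr ?opprK ?rh ?oppr0. Qed.

Lemma roots_perpE r : roots_of G S' r <-> R0 r /\ S' r.
Proof. by split=> [[[rh r_perp] rr]|[[rr _] Sr]]; [do !split|split]. Qed.

Lemma compatible_nonneg P R : weyl_chamber G R P -> compatible G h P Gam -> nonneg_on G Gam P.
Proof.
case/weyl_chamberP=> y [_ Py] comp g r Gg; have P_pos r' : P r' -> 0 < form G r' y by case/Py.
apply: (simple_roots_ind P_pos (Q := fun r => 0 <= form G g r)) => [e|a b _ _].
  exact: (comp g Gg).2.
by rewrite formDr; apply: addr_ge0.
Qed.

Lemma nonneg_compatible P : (forall l, Gam l -> root_k G h 1 l) ->
  nonneg_on G Gam P -> compatible G h P Gam.
Proof. by move=> Gam_root1 Gam_ge0 l Gl; split=> [|e [Pe _]]; [apply: Gam_root1|apply: Gam_ge0]. Qed.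

Lemma exists_nonorth r : form G r h = 0 -> ~ S' r -> exists2 g, Gam g & form G r g != 0.
Proof.
move=> rh r_not_perp; apply: NNPP => r_orth; apply: r_not_perp; split=> // g Gg.
by apply: NNPP => rg; apply: r_orth; exists g => //; apply/eqP.
Qed.

Lemma not_separating_sign r : ~ (exists r, separating G h Gam r) -> R0 r ->
  (forall g, Gam g -> 0 <= form G r g) \/ (forall g, Gam g -> 0 <= form G (- r) g).
Proof.
move=> no_sep Rr.
case: (classic (forall g, Gam g -> 0 <= form G r g)) => [|r_not_ge0]; [by left|right=> v Gv].
rewrite formNl oppr_ge0 leNgt; apply/negP => rv_gt0.
apply: r_not_ge0 => u Gu; rewrite leNgt; apply/negP => ru_lt0.
by apply: no_sep; exists r; split=> //; exists v, u.
Qed.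

Lemma no_separating_of_compatible P :
  weyl_chamber G R0 P -> compatible G h P Gam -> ~ exists r, separating G h Gam r.
Proof.
move=> chP /(compatible_nonneg chP) Gam_ge0 [r [Rr [u [v [Gu [Gv [ru_gt0 rv_lt0]]]]]]].
case: (weyl_chamber_orN root0N chP Rr) => [Pr|PNr].
  by have := Gam_ge0 v r Gv Pr; rewrite formC // leNgt rv_lt0.
by have := Gam_ge0 u _ Gu PNr; rewrite formNr formC // oppr_ge0 leNgt ru_gt0.
Qed.

Lemma compatible_face_uniq P' P1 P2 :
  weyl_chamber G R0 P1 /\ compatible G h P1 Gam /\ face S' P1 P' ->
  weyl_chamber G R0 P2 /\ compatible G h P2 Gam /\ face S' P2 P' ->
  forall r, P1 r -> P2 r.
Proof.
move=> [ch1 [/(compatible_nonneg ch1) Gam_ge1 face1]].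
move=> [ch2 [/(compatible_nonneg ch2) Gam_ge2 face2]] r P1r.
have Rr := weyl_chamber_sub ch1 P1r.
case: (classic (S' r)) => [Sr|r_not_perp]; first by case/face2: ((face1 r).1 (conj P1r Sr)).
have [g Gg rg_neq0] := exists_nonorth Rr.2 r_not_perp.
have rg_gt0 : 0 < form G r g by rewrite lt0r rg_neq0 formC // Gam_ge1.
case: (weyl_chamber_orN root0N ch2 Rr) => // PNr.
by have := Gam_ge2 g _ Gg PNr; rewrite formNr formC // oppr_ge0 leNgt rg_gt0.
Qed.

Lemma perpN r : S' (- r) -> S' r.
Proof.
case; rewrite formNl => /eqP; rewrite oppr_eq0 => /eqP rh r_perp.
by split=> // g /r_perp; rewrite formNl => /eqP; rewrite oppr_eq0 => /eqP.
Qed.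

Section Perturbation.
Variables (s : seq (vec n)) (y' : vec n) (B : int).
Hypothesis sGam : forall l, l \in s -> Gam l.
Hypothesis s_span :
  forall x, (forall l, l \in s -> form G l x = 0) -> forall g, Gam g -> form G g x = 0.
Hypothesis y'_reg : regular G (roots_of G S') y'.
Hypothesis y'_bound : forall r, R0 r -> `|form G r y'| <= B.
Hypothesis no_sep : ~ exists r, separating G h Gam r.

Let y := y' + (B + 1) *: \sum_(l <- s) l.

Lemma form_perturbed r : form G r y = form G r y' + (B + 1) * \sum_(l <- s) form G r l.
Proof. by rewrite formDr formZr form_sumr. Qed.

Lemma form_perturbed_perp r : S' r -> form G r y = form G r y'.
Proof.
case=> _ r_perp; rewrite form_perturbed big1_seq ?mulr0 ?addr0 // => l /andP[_ ls].
exact/r_perp/sGam.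
Qed.

Lemma form_perturbed_gt0 r : R0 r -> ~ S' r ->
  (forall g, Gam g -> 0 <= form G r g) -> 0 < form G r y.
Proof.
move=> Rr r_not_perp r_ge0; rewrite form_perturbed; apply: dominated_gt0 (y'_bound Rr) _.
have [g Gg rg_neq0] := exists_nonorth Rr.2 r_not_perp.
have rs_ge0 l : l \in s -> 0 <= form G r l by move/sGam/r_ge0.
rewrite big_seq lt0r sumr_ge0 // andbT psumr_neq0 //.
apply: contraNT rg_neq0 => /hasPn rs_le0; apply/eqP; rewrite formC //.
apply: s_span Gg => l ls; rewrite formC //; apply/eqP.
by rewrite eq_le rs_ge0 // andbT leNgt; move: (rs_le0 l ls); rewrite ls.
Qed.

Lemma form_perturbed_sign r : R0 r -> ~ S' r ->
  (0 < form G r y /\ forall g, Gam g -> 0 <= form G r g) \/ form G r y < 0.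
Proof.
move=> Rr r_not_perp; case: (not_separating_sign no_sep Rr) => [r_ge0|rN_ge0].
  by left; split=> //; apply: form_perturbed_gt0.
right; have := form_perturbed_gt0 (root0N Rr) (fun SNr => r_not_perp (perpN SNr)) rN_ge0.
by rewrite formNl oppr_gt0.
Qed.

Lemma perturbed_regular : regular G R0 y.
Proof.
move=> r Rr; case: (classic (S' r)) => [Sr|r_not_perp].
  by rewrite form_perturbed_perp //; apply/y'_reg/roots_perpE.
by case: (form_perturbed_sign Rr r_not_perp) => [[/gt_eqF-> _]|/lt_eqF->].
Qed.

Lemma perturbed_nonneg : nonneg_on G Gam (chamber_of G R0 y).
Proof.
move=> g r Gg [Rr ry_gt0]; rewrite formC //.
case: (classic (S' r)) => [[_ r_perp]|r_not_perp]; first by rewrite r_perp.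
case: (form_perturbed_sign Rr r_not_perp) => [[_ r_ge0]|]; first exact: r_ge0.
by rewrite ltNge ltW.
Qed.

Lemma perturbed_face : face S' (chamber_of G R0 y) (chamber_of G (roots_of G S') y').
Proof.
move=> r; split=> [[[Rr ry_gt0] Sr]|[/roots_perpE[Rr Sr] ry_gt0]].
  by split; [apply/roots_perpE|rewrite -form_perturbed_perp].
by split; [split; last rewrite form_perturbed_perp|].
Qed.

Lemma exists_perturbed_chamber : exists P, weyl_chamber G R0 P /\
  nonneg_on G Gam P /\ face S' P (chamber_of G (roots_of G S') y').
Proof.
exists (chamber_of G R0 y); split; last split; [|exact: perturbed_nonneg|exact: perturbed_face].
by apply/weyl_chamberP; exists y; split; [exact: perturbed_regular|].
Qed.

End Perturbation.

Lemma exists_compatible_face P' : hyperbolic G -> 0 < form G h h ->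
  (forall l, Gam l -> root_k G h 1 l) -> ~ (exists r, separating G h Gam r) ->
  weyl_chamber G (roots_of G S') P' ->
  exists P, weyl_chamber G R0 P /\ compatible G h P Gam /\ face S' P P'.
Proof.
move=> hypG hh_gt0 Gam_root1 no_sep /weyl_chamberP[y' [y'_reg P'E]].
have [B y'_bound] := root0_form_bounded sG hypG hh_gt0 y'.
have [s [sGam s_span]] := exists_orth_spanning G Gam.
have [P [chP [Gam_ge0 faceP]]] := exists_perturbed_chamber sGam s_span y'_reg y'_bound no_sep.
exists P; split=> //; split; first exact: nonneg_compatible.
by move=> r; rewrite P'E; apply: faceP.
Qed.

Lemma exists_weyl_chamber R : hyperbolic G -> 0 < form G h h ->
  (forall r, R r -> R0 r) -> exists P, weyl_chamber G R P.
Proof.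
move=> hypG hh_gt0 R_root0.
have [y y_reg] := exists_regular_vector (root0_form_bounded sG hypG hh_gt0)
  (fun r Rr => root_mulmx_neq0 Rr.1).
by exists (chamber_of G R y); apply/weyl_chamberP; exists y; split=> // r /R_root0/y_reg.
Qed.

End Compatible.

Theorem lemma2p4 (n : nat) (G : 'M[int]_n) (h : vec n) (Gam : vset n) :
  polarized G h ->
  (forall l, Gam l -> root_k G h 1 l) ->
  ((exists P, weyl_chamber G (root_k G h 0) P /\ compatible G h P Gam)
     <-> ~ (exists r, separating G h Gam r)) /\
  (~ (exists r, separating G h Gam r) ->
   forall P' : vset n,
     weyl_chamber G (roots_of G (perp_lattice G h Gam)) P' ->
     (exists P, weyl_chamber G (root_k G h 0) P /\ compatible G h P Gam /\
                face (perp_lattice G h Gam) P P') /\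
     (forall P1 P2,
        weyl_chamber G (root_k G h 0) P1 /\ compatible G h P1 Gam /\
          face (perp_lattice G h Gam) P1 P' ->
        weyl_chamber G (root_k G h 0) P2 /\ compatible G h P2 Gam /\
          face (perp_lattice G h Gam) P2 P' ->
        forall r, P1 r <-> P2 r)).
Proof.
move=> [[sG _] [hypG hh_gt0]] Gam_root1.
have exists_face := exists_compatible_face sG hypG hh_gt0 Gam_root1.
split.
  split=> [[P [chP compP]]|no_sep]; first exact: no_separating_of_compatible chP compP.
  have [P' chP'] : exists P', weyl_chamber G (roots_of G (perp_lattice G h Gam)) P'.
    by apply: exists_weyl_chamber sG _ hypG hh_gt0 _ => r /roots_perpE[].
  by have [P [chP [compP _]]] := exists_face P' no_sep chP'; exists P.
move=> no_sep P' chP'; split; first exact: exists_face.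
move=> P1 P2 ch1 ch2 r.
by split; [apply: (compatible_face_uniq sG ch1 ch2)|apply: (compatible_face_uniq sG ch2 ch1)].
Qed.
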